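(* Let $\mathcal H_d$ be a Hilbert space of finite dimension $d$ and let $\mathsf C=(C_1,\dots,C_n)$ be an $n$-outcome observable (POVM) on $\mathcal H_d$. Then the boundariness of $\mathsf C$ in the convex set of $n$-outcome observables on $\mathcal H_d$ equals $b(\mathsf C)=\lambda_{\min}$, where $\lambda_{\min}$ is the smallest number among all eigenvalues of all the effects $C_1,\dots,C_n$.
   Context: An $n$-outcome observable on $\mathcal H_d$ is an $n$-tuple of positive operators $(C_1,\dots,C_n)$ with $\sum_j C_j=I$; the set of these is convex under componentwise convex combinations. For a convex set $Z$ and $x,y\in Z$, the weight function is $t_y(x)=\sup\{0\leq t<1 : \frac{y-tx}{1-t}\in Z\}$, and the boundariness of $y$ is $b(y)=\inf_{x\in Z}t_y(x)$. *)

From HB Require Import structures.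
From mathcomp Require Import all_boot all_order all_algebra.
From mathcomp Require Import boolp classical_sets reals.
From mathcomp Require Import complex.
Set Implicit Arguments. Unset Strict Implicit. Unset Printing Implicit Defensive.
Import Order.TTheory GRing.Theory Num.Theory.
Local Open Scope ring_scope.
Local Open Scope complex_scope.
Local Open Scope classical_set_scope.

(* A (bounded) operator on H_d = C^d is a d x d complex matrix. *)
(* Positive (semidefinite) operator: <v, A v> >= 0 for every vector v
   (in the complex order of R[i], i.e. real and nonnegative). *)
Definition psd (R : realType) (d : nat) (A : 'M[R[i]]_d) : Prop :=
  forall v : 'rV[R[i]]_d, 0 <= (v *m A *m (map_mx Num.conj v)^T) 0 0.

Definition observables (R : realType) (n d : nat) : set ('I_n -> 'M[R[i]]_d) :=
  [set C | (forall j, psd (C j)) /\ \sum_(j < n) C j = 1%:M].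

Definition wcomb (R : realType) (n d : nat) (t : R)
  (y x : 'I_n -> 'M[R[i]]_d) : 'I_n -> 'M[R[i]]_d :=
  fun j => ((1 - t)^-1)%:C *: (y j - t%:C *: x j).

Definition weight (R : realType) (n d : nat) (Z : set ('I_n -> 'M[R[i]]_d))
  (y x : 'I_n -> 'M[R[i]]_d) : R :=
  sup [set t : R | 0 <= t < 1 /\ Z (wcomb t y x)].

Definition boundariness (R : realType) (n d : nat) (Z : set ('I_n -> 'M[R[i]]_d))
  (y : 'I_n -> 'M[R[i]]_d) : R :=
  inf [set weight Z y x | x in Z].

From HB Require Import structures.
From mathcomp Require Import all_boot all_order all_algebra.
From mathcomp Require Import boolp classical_sets reals.
From mathcomp Require Import complex lra.
Import Order.TTheory GRing.Theory Num.Theory.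
Set Implicit Arguments. Unset Strict Implicit. Unset Printing Implicit Defensive.
Local Open Scope ring_scope.
Local Open Scope complex_scope.
Local Open Scope classical_set_scope.

(* Every effect C_j satisfies lam_min I <= C_j, and every effect x_j of any
   observable satisfies x_j <= I; hence C_j - t x_j >= (lam_min - t) I >= 0 for
   0 <= t <= lam_min, so (C - t x)/(1 - t) is an observable and t_C(x) >= lam_min.
   Conversely, let v be an eigenvector of C_j0 for lam_min and x the observable
   with x_j0 = I: the j0-th effect of (C - t x)/(1 - t) has expectation
   (lam_min - t)/(1 - t) <v, v> at v, so t <= lam_min and t_C(x) = lam_min. *)

Section WeightBounds.
Variables (R : realType) (n d : nat) (Z : set ('I_n -> 'M[R[i]]_d)).
Implicit Types (y x : 'I_n -> 'M[R[i]]_d) (l : R).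

Lemma wcomb0 y x : wcomb 0 y x = y.
Proof. by apply: funext => j; rewrite /wcomb subr0 invr1 scale0r subr0 scale1r. Qed.

Lemma weight_ge y x l : 0 <= l <= 1 ->
  (forall t, 0 <= t <= l -> t < 1 -> Z (wcomb t y x)) -> l <= weight Z y x.
Proof.
move=> /andP[l0 l1] inZ; rewrite /weight.
set S := [set t | _].
have S_t t : 0 <= t <= l -> t < 1 -> S t.
  by move=> tl t1; split; [lra | exact: inZ].
have S0 : S 0 by apply: S_t; lra.
have supS : has_sup S by split; [exists 0 | exists 1 => t [/andP[_ /ltW]]].
have sup0 : 0 <= sup S := sup_upper_bound supS S0.
rewrite leNgt; apply/negP => lt_sup.
have /(sup_upper_bound supS) : S ((sup S + l) / 2) by apply: S_t; lra.
lra.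
Qed.

Lemma weight_le y x l : Z y ->
  (forall t, 0 <= t < 1 -> Z (wcomb t y x) -> t <= l) -> weight Z y x <= l.
Proof.
move=> Zy t_le; apply: ge_sup => [|t [t01 Zt]]; last exact: t_le.
by exists 0; split; rewrite ?lexx ?ltr01 ?wcomb0.
Qed.

Lemma boundariness_eq y x0 l :
  (forall x, Z x -> l <= weight Z y x) -> Z x0 -> weight Z y x0 <= l ->
  boundariness Z y = l.
Proof.
move=> w_ge Zx0 w_le; apply/le_anti/andP; split.
  apply: le_trans w_le; apply: ge_inf; last by exists x0.
  by exists l => _ [x Zx <-]; exact: w_ge.
apply: lb_le_inf; first by exists (weight Z y x0), x0.
by move=> _ [x Zx <-]; exact: w_ge.
Qed.

End WeightBounds.

Section HermitianForm.
Variables (R : realType) (d : nat).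
Local Notation C := R[i].
Implicit Types (A B : 'M[C]_d) (u v w : 'rV[C]_d).

Definition hform A u w : C := (u *m A *m (map_mx Num.conj w)^T) 0 0.

Lemma psdE A : psd A = forall v, 0 <= hform A v v.
Proof. by []. Qed.

Lemma hformDl A u1 u2 w : hform A (u1 + u2) w = hform A u1 w + hform A u2 w.
Proof. by rewrite /hform !mulmxDl mxE. Qed.

Lemma hformDr A u w1 w2 : hform A u (w1 + w2) = hform A u w1 + hform A u w2.
Proof. by rewrite /hform map_mxD linearD mulmxDr mxE. Qed.

Lemma hformZl A c u w : hform A (c *: u) w = c * hform A u w.
Proof. by rewrite /hform -!scalemxAl mxE. Qed.

Lemma hformZr A c u w : hform A u (c *: w) = Num.conj c * hform A u w.
Proof. by rewrite /hform map_mxZ linearZ -scalemxAr mxE. Qed.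

Lemma hformD A B u w : hform (A + B) u w = hform A u w + hform B u w.
Proof. by rewrite /hform mulmxDr mulmxDl mxE. Qed.

Lemma hformZ A c u w : hform (c *: A) u w = c * hform A u w.
Proof. by rewrite /hform -scalemxAr -scalemxAl mxE. Qed.

Lemma hformN A u w : hform (- A) u w = - hform A u w.
Proof. by rewrite /hform mulmxN mulNmx mxE. Qed.

Lemma hform_sum n (A : 'I_n -> 'M[C]_d) u w :
  hform (\sum_j A j) u w = \sum_j hform (A j) u w.
Proof. by rewrite /hform mulmx_sumr mulmx_suml summxE. Qed.

Lemma hform_delta A i j : hform A (delta_mx 0 i) (delta_mx 0 j) = A i j.
Proof.
by rewrite /hform map_delta_mx ?conjC0 // trmx_delta -rowE -colE !mxE.
Qed.

Lemma hform_conj_tr A v :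
  hform (map_mx Num.conj A)^T v v = Num.conj (hform A v v).
Proof.
rewrite /hform; set M := v *m A *m _.
have -> : Num.conj (M 0 0) = (map_mx Num.conj M)^T 0 0 by rewrite !mxE.
rewrite !map_mxM !trmx_mul -map_trmx trmxK.
by rewrite -map_mx_comp (map_mx_id (@conjCK _)) mulmxA.
Qed.

Lemma hform_eigen A a v : v *m A = a *: v -> hform A v v = a * hform 1%:M v v.
Proof. by move=> vA; rewrite /hform vA mulmx1 -scalemxAl mxE. Qed.

Lemma hform1_ge0 v : 0 <= hform 1%:M v v.
Proof.
by rewrite /hform mulmx1 mxE sumr_ge0 // => k _; rewrite !mxE mul_conjC_ge0.
Qed.

Lemma hform1_gt0 v : v != 0 -> 0 < hform 1%:M v v.
Proof.
by move=> /dotmx_is_dotmx; rewrite dotmxE /hform mulmx1 map_trmx.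
Qed.

Lemma psd0 : psd (0 : 'M[C]_d).
Proof. by move=> v; rewrite /hform mulmx0 mul0mx mxE. Qed.

Lemma psd1 : psd (1%:M : 'M[C]_d).
Proof. exact: hform1_ge0. Qed.

(* Polarization: evaluate the quadratic form at e_i + e_j and e_i + 'i e_j. *)
Lemma hform_eq0 A : (forall v, hform A v v = 0) -> A = 0.
Proof.
move=> A0; apply/matrixP => i j; rewrite mxE -hform_delta.
set ei := delta_mx 0 i; set ej := delta_mx 0 j.
have := A0 (ei + ej); rewrite !(hformDl, hformDr) !A0 add0r addr0.
move=> /eqP; rewrite addr_eq0 => /eqP Aji.
have := A0 (ei + 'i *: ej).
rewrite !(hformDl, hformDr, hformZl, hformZr) !A0 !(mulr0, add0r, addr0) conjCi.
rewrite Aji mulNr mulrN opprK -mulr2n => /eqP; rewrite mulrn_eq0 /= mulf_eq0.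
by rewrite (negPf (neq0Ci C)) => /eqP ->; rewrite oppr0.
Qed.

Lemma psd_normalmx A : psd A -> A \is normalmx.
Proof.
move=> psdA; suff A_adj : A = (map_mx Num.conj A)^T.
  by rewrite qualifE -map_trmx -A_adj.
apply/eqP; rewrite -subr_eq0; apply/eqP/hform_eq0 => v.
by rewrite hformD hformN hform_conj_tr conj_Creal ?subrr // ger0_real ?psdA.
Qed.

(* Diagonalize A by a unitary P: in the coordinates w = v P^-1 both forms are
   sums over the spectrum, and each eigenvalue dominates mu. *)
Lemma hform_ge_eigenvalues A (mu : C) : A \is normalmx ->
  (forall a, eigenvalue A a -> mu <= a) ->
  forall v, mu * hform 1%:M v v <= hform A v v.
Proof.
move=> /orthomx_spectralP A_diag mu_le v.
have P_unit : spectralmx A \in unitmx := spectral_unit A.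
have P_inv := invmx_unitary (spectral_unitarymx A).
set P := spectralmx A in A_diag P_unit P_inv; set D := spectral_diag A in A_diag.
set w := v *m invmx P.
have wP : (map_mx Num.conj w)^T = P *m (map_mx Num.conj v)^T.
  by rewrite /w P_inv map_mxM -map_mx_comp (map_mx_id (@conjCK _)) trmx_mul trmxK.
have -> : hform A v v = hform (diag_mx D) w w by rewrite /hform wP A_diag /w !mulmxA.
have -> : hform 1%:M v v = hform 1%:M w w.
  by rewrite /hform wP /w !mulmx1 mulmxA mulmxKV.
rewrite /hform mulmx1 mxE mulr_sumr mxE; apply: ler_sum => k _.
rewrite mul_mx_diag !mxE mulrAC [leRHS]mulrC ler_wpM2r ?mul_conjC_ge0 //.
apply/mu_le/eigenvalueP; exists (delta_mx 0 k *m P).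
  rewrite A_diag !mulmxA mulmxK // mul_mx_diag scalemxAl; congr (_ *m _).
  apply/matrixP => i j; rewrite !mxE.
  by case: (j =P k) => [->|_]; rewrite ?andbF ?mul0r ?mulr0 // mulrC.
apply: contraNneq (oner_neq0 C) => /(congr1 (mulmx^~ (invmx P))).
by rewrite mulmxK // mul0mx => /matrixP/(_ 0 k)/eqP; rewrite !mxE !eqxx.
Qed.

End HermitianForm.

Section Observables.
Variables (R : realType) (n d : nat).
Local Notation C := R[i].
Implicit Types (E x : 'I_n -> 'M[C]_d) (v : 'rV[C]_d).

Lemma observables_le1 x j v : observables x -> hform (x j) v v <= hform 1%:M v v.
Proof.
move=> [x_psd x_sum]; rewrite -x_sum hform_sum (bigD1 j) //= lerDl.
by apply: sumr_ge0 => k _; exact: x_psd.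
Qed.

Lemma observables_eigenvalue_itv E j (a : R) :
  observables E -> eigenvalue (E j) a%:C -> 0 <= a <= 1.
Proof.
move=> obsE /eigenvalueP[v /hform_eigen Ev /hform1_gt0 v_gt0].
have a0 : 0 <= hform (E j) v v := obsE.1 j v.
have a1 := observables_le1 j v obsE.
rewrite Ev pmulr_lge0 // lecR in a0.
by rewrite Ev -{2}[hform 1%:M v v]mul1r ler_pM2r // lecR in a1; rewrite a0 a1.
Qed.

Lemma sum_wcomb E x t : \sum_j E j = 1%:M -> \sum_j x j = 1%:M -> t != 1 ->
  \sum_j wcomb t E x j = 1%:M.
Proof.
move=> E_sum x_sum t1; rewrite -scaler_sumr sumrB -scaler_sumr E_sum x_sum.
rewrite -{1}[1%:M]scale1r -scalerBl scalerA.
have -> : 1 - t%:C = (1 - t)%:C by rewrite rmorphB rmorph1.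
by rewrite -rmorphM mulVf ?scale1r // subr_eq0 eq_sym.
Qed.

Lemma observables_wcomb E x (lam t : R) : observables E -> observables x ->
  (forall j v, lam%:C * hform 1%:M v v <= hform (E j) v v) ->
  0 <= t <= lam -> t < 1 -> observables (wcomb t E x).
Proof.
move=> [_ E_sum] obsx lam_le /andP[t0 tl] t1; split; last first.
  by apply: sum_wcomb E_sum obsx.2 _; rewrite lt_eqF.
move=> j; rewrite psdE => v; rewrite /wcomb hformZ hformD hformN hformZ.
apply: mulr_ge0; first by rewrite lecR invr_ge0 subr_ge0 ltW.
rewrite subr_ge0; apply: le_trans (lam_le j v).
apply: (le_trans (ler_wpM2l _ (observables_le1 j v obsx))); first by rewrite lecR.
by rewrite ler_wpM2r ?hform1_ge0 ?lecR.
Qed.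

Definition trivial_obs (j0 : 'I_n) : 'I_n -> 'M[C]_d :=
  fun j => if j == j0 then 1%:M else 0.

Lemma observables_trivial_obs j0 : observables (trivial_obs j0).
Proof.
split=> [j|]; first by rewrite /trivial_obs; case: eqP => _; [exact: psd1 | exact: psd0].
by rewrite (bigD1 j0) //= /trivial_obs eqxx big1 ?addr0 // => j /negPf ->.
Qed.

Lemma weight_trivial_obs_le E j0 (lam : R) v : observables E ->
  v *m E j0 = lam%:C *: v -> v != 0 ->
  weight (@observables R n d) E (trivial_obs j0) <= lam.
Proof.
move=> obsE Ev /hform1_gt0 v_gt0; apply: weight_le => // t /andP[_ t1] [obs_t _].
have : 0 <= hform (wcomb t E (trivial_obs j0) j0) v v := obs_t j0 v.
rewrite /wcomb /trivial_obs eqxx.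
rewrite hformZ hformD hformN hformZ (hform_eigen Ev) -mulrBl -rmorphB.
rewrite pmulr_rge0 ?ltcR ?invr_gt0 ?subr_gt0 // pmulr_lge0 //.
by rewrite lecR subr_ge0.
Qed.

End Observables.

Theorem proposition4 (R : realType) (n d : nat) (C : 'I_n -> 'M[R[i]]_d)
  (lam_min : R) :
  @observables R n d C ->
  (exists j : 'I_n, eigenvalue (C j) lam_min%:C) ->
  (forall (j : 'I_n) (a : R[i]), eigenvalue (C j) a -> lam_min%:C <= a) ->
  boundariness (@observables R n d) C = lam_min.
Proof.
move=> obsC [j0 eig0] lam_le.
have lam01 := observables_eigenvalue_itv obsC eig0.
have [v0 Cv0 v0_neq0] := eigenvalueP eig0.
have C_ge j v : lam_min%:C * hform 1%:M v v <= hform (C j) v v.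
  exact: hform_ge_eigenvalues (psd_normalmx (obsC.1 j)) (lam_le j) v.
apply: (boundariness_eq _ (@observables_trivial_obs R n d j0)).
- move=> x obsx; apply: (weight_ge lam01) => t tl t1.
  exact: observables_wcomb obsC obsx C_ge tl t1.
- exact: weight_trivial_obs_le obsC Cv0 v0_neq0.
Qed.
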